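(* Let $B$ be the open unit disk, let $U=(u,v)\in C^1(\overline B;\mathbb R^2)$ be harmonic in $B$, $\Phi=U|_{\partial B}$, $\tilde u$ a harmonic conjugate of $u$ and $f=u+i\tilde u$. Assume $\det DU>0$ on $\partial B$ and that $\frac{\partial u}{\partial\theta}\big|_{\partial B}$ vanishes at only finitely many points. Then $\mathrm{WN}(f(\partial B))=\mathrm{WN}(\Phi(\partial B))$.
   Context: For a closed curve parameterized by a $C^1$ map $\theta\mapsto F(e^{i\theta})$ with $\partial F/\partial\theta\neq0$ for all $\theta$, its winding number is $\mathrm{WN}=\frac1{2\pi}\int_{\partial B}\mathrm d\,\arg\left(\frac{\partial F}{\partial\theta}\right)$. *)

From Stdlib Require Import Reals Lra ClassicalEpsilon List.
From Coquelicot Require Import Coquelicot.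
Open Scope R_scope.

Definition in_B (x y : R) : Prop := x ^ 2 + y ^ 2 < 1.
Definition in_cB (x y : R) : Prop := x ^ 2 + y ^ 2 <= 1.
Definition on_dB (x y : R) : Prop := x ^ 2 + y ^ 2 = 1.

Definition continuous_on_cB (g : R -> R -> R) : Prop :=
  forall x y, in_cB x y ->
  forall eps : R, 0 < eps -> exists delta : R, 0 < delta /\
    forall x' y', in_cB x' y' -> Rabs (x' - x) < delta -> Rabs (y' - y) < delta ->
      Rabs (g x' y' - g x y) < eps.

(* On ∂B, Du means (ux, uy). *)
Definition C1_cB (u ux uy : R -> R -> R) : Prop :=
  continuous_on_cB u /\ continuous_on_cB ux /\ continuous_on_cB uy /\
  forall x y, in_B x y -> differentiable_pt_lim u x y (ux x y) (uy x y).

Definition harmonic_in_B (u : R -> R -> R) : Prop :=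
  exists ux uy uxx uxy uyx uyy : R -> R -> R,
  forall x y, in_B x y ->
    differentiable_pt_lim u x y (ux x y) (uy x y) /\
    differentiable_pt_lim ux x y (uxx x y) (uxy x y) /\
    differentiable_pt_lim uy x y (uyx x y) (uyy x y) /\
    continuity_2d_pt uxx x y /\ continuity_2d_pt uxy x y /\
    continuity_2d_pt uyx x y /\ continuity_2d_pt uyy x y /\
    uxx x y + uyy x y = 0.

Definition bdry (F : R -> R -> R) (t : R) : R := F (cos t) (sin t).

Definition arg_lift (a b : R -> R) (phi : R -> R) : Prop :=
  (forall t, continuous phi t) /\
  forall t, a t = sqrt (a t ^ 2 + b t ^ 2) * cos (phi t) /\
            b t = sqrt (a t ^ 2 + b t ^ 2) * sin (phi t).

(* Winding number of the closed C^1 curve theta |-> (F1, F2)(e^{i theta}):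
   WN = (1/2pi) ∫_{∂B} d arg (∂F/∂theta), i.e. the total increment over [0, 2pi]
   of a continuous argument of the tangent ∂F/∂theta, divided by 2pi. *)
Definition WN (F1 F2 : R -> R -> R) : R :=
  epsilon (inhabits 0) (fun w => exists phi,
    arg_lift (Derive (bdry F1)) (Derive (bdry F2)) phi /\
    w = (phi (2 * PI) - phi 0) / (2 * PI)).

From Stdlib Require Import Reals Lra Lia List FunctionalExtensionality PropExtensionality.
From Coquelicot Require Import Coquelicot.
Open Scope R_scope.

(* The tangents (d/dθ) f(e^{iθ}) = (u_θ, ũ_θ) and (d/dθ) Φ(e^{iθ}) = (u_θ, v_θ) share their
   first component, and ũ_θ = u_r on ∂B by the Cauchy-Riemann equations.  As
   u_r v_θ - u_θ v_r = det DU > 0 on ∂B, the two tangents are never antiparallel, so the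
   angle from one to the other, 2 atan (p × q / (|p| |q| + p · q)), is a continuous
   2π-periodic function of θ: adding it to a continuous argument of one tangent gives a
   continuous argument of the other with the same total increment.  The boundary θ-derivatives are
   obtained along radii r_n → 1, where the C^1 hypotheses make the θ-derivatives converge
   locally uniformly. *)

Lemma on_dB_cos_sin t : on_dB (cos t) (sin t).
Proof. unfold on_dB. pose proof (sin2_cos2 t). unfold Rsqr in *. nra. Qed.

Lemma filterlim_Rmult {T} {F : (T -> Prop) -> Prop} {FF : Filter F} (f g : T -> R) a b :
  filterlim f F (locally a) -> filterlim g F (locally b) ->
  filterlim (fun z => f z * g z) F (locally (a * b)).
Proof. intros Hf Hg. exact (filterlim_comp_2 _ _ _ Hf Hg (filterlim_mult a b)). Qed.

Lemma filterlim_Rplus {T} {F : (T -> Prop) -> Prop} {FF : Filter F} (f g : T -> R) a b :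
  filterlim f F (locally a) -> filterlim g F (locally b) ->
  filterlim (fun z => f z + g z) F (locally (a + b)).
Proof. intros Hf Hg. exact (filterlim_comp_2 _ _ _ Hf Hg (filterlim_plus a b)). Qed.

Lemma filterlim_continuous_on_cB {T} {F : (T -> Prop) -> Prop} {FF : Filter F}
  (g : R -> R -> R) (a b : T -> R) x y :
  continuous_on_cB g -> in_cB x y ->
  filterlim a F (locally x) -> filterlim b F (locally y) ->
  F (fun z => in_cB (a z) (b z)) ->
  filterlim (fun z => g (a z) (b z)) F (locally (g x y)).
Proof.
  intros Hg Hxy Ha Hb Hin P [eps HP].
  destruct (Hg x y Hxy eps (cond_pos eps)) as [d [Hd Hgd]].
  pose proof (Ha _ (locally_ball x (mkposreal d Hd))) as Hax.
  pose proof (Hb _ (locally_ball y (mkposreal d Hd))) as Hby.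
  unfold filtermap in *.
  apply (filter_imp (fun z => in_cB (a z) (b z) /\ ball x d (a z) /\ ball y d (b z))).
  - intros z [Hz [Hxz Hyz]]. apply HP, Hgd; assumption.
  - apply filter_and; [exact Hin | apply filter_and; assumption].
Qed.

Lemma continuous_Rmult (f g : R -> R) t :
  continuous f t -> continuous g t -> continuous (fun s => f s * g s) t.
Proof. exact (continuous_mult (K := R_AbsRing) f g t). Qed.

Lemma continuous_Rplus (f g : R -> R) t :
  continuous f t -> continuous g t -> continuous (fun s => f s + g s) t.
Proof. exact (continuous_plus (V := R_NormedModule) f g t). Qed.

Lemma continuous_bdry g t : continuous_on_cB g -> continuous (bdry g) t.
Proof.
  intros Hg. apply (filterlim_continuous_on_cB g cos sin).
  - exact Hg.
  - unfold in_cB. rewrite (on_dB_cos_sin t). lra.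
  - apply continuous_cos.
  - apply continuous_sin.
  - apply filter_forall. intros s. unfold in_cB. rewrite (on_dB_cos_sin s). lra.
Qed.

Definition rad (n : nat) : R := 1 - / INR (S (S n)).

Lemma rad_bounds n : 0 < rad n < 1.
Proof.
  unfold rad. assert (H2 : 2 <= INR (S (S n))).
  { change 2 with (INR 2). apply le_INR. lia. }
  assert (0 < / INR (S (S n))) by (apply Rinv_0_lt_compat; lra).
  assert (/ INR (S (S n)) <= / 2) by (apply Rinv_le_contravar; lra).
  lra.
Qed.

Lemma is_lim_seq_rad : is_lim_seq rad 1.
Proof.
  replace (Finite 1) with (Rbar_minus 1 0) by (simpl; f_equal; ring).
  apply is_lim_seq_minus'; [apply is_lim_seq_const |].
  replace (Finite 0) with (Rbar_inv p_infty) by reflexivity.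
  apply is_lim_seq_inv; [| discriminate].
  apply (is_lim_seq_incr_1 (fun n => INR (S n))), (is_lim_seq_incr_1 INR), is_lim_seq_INR.
Qed.

Lemma in_B_rad_scale n x y : in_cB x y -> in_B (rad n * x) (rad n * y).
Proof. unfold in_cB, in_B. pose proof (rad_bounds n). nra. Qed.

Lemma filterlim_rad_mul {T} {F : (T -> Prop) -> Prop} {FF : Filter F}
  (k : T -> nat) (a : T -> R) x :
  filterlim k F eventually -> filterlim a F (locally x) ->
  filterlim (fun z => rad (k z) * a z) F (locally x).
Proof.
  intros Hk Ha. rewrite <- (Rmult_1_l x).
  exact (filterlim_Rmult _ a 1 x (filterlim_comp _ _ _ k rad F eventually (locally 1) Hk is_lim_seq_rad) Ha).
Qed.

Lemma filterlim_rad_scale x : filterlim (fun n => rad n * x) eventually (locally x).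
Proof.
  apply (filterlim_rad_mul (fun n => n)); [apply filterlim_id | apply filterlim_const].
Qed.

Lemma continuous_on_cB_ext_dB g h :
  continuous_on_cB g -> continuous_on_cB h ->
  (forall x y, in_B x y -> g x y = h x y) ->
  forall x y, on_dB x y -> g x y = h x y.
Proof.
  intros Hg Hh Egh x y Hxy.
  assert (Hc : in_cB x y) by (unfold in_cB, on_dB in *; lra).
  pose proof (filterlim_rad_scale x) as Hx. pose proof (filterlim_rad_scale y) as Hy.
  assert (Hin : eventually (fun n => in_cB (rad n * x) (rad n * y))).
  { apply filter_forall. intros n. apply Rlt_le, in_B_rad_scale, Hc. }
  apply (filterlim_locally_unique (K := R_AbsRing) (V := R_NormedModule) (F := eventually)
    (fun n => g (rad n * x) (rad n * y))).
  - exact (filterlim_continuous_on_cB g _ _ x y Hg Hc Hx Hy Hin).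
  - apply (filterlim_ext (fun n => h (rad n * x) (rad n * y))).
    + intros n. symmetry. apply Egh, in_B_rad_scale, Hc.
    + exact (filterlim_continuous_on_cB h _ _ x y Hh Hc Hx Hy Hin).
Qed.

Lemma continuous_on_cB_opp g : continuous_on_cB g -> continuous_on_cB (fun x y => - g x y).
Proof.
  intros Hg x y Hxy eps Heps. destruct (Hg x y Hxy eps Heps) as [d [Hd Hgd]].
  exists d. split; [exact Hd |]. intros x' y' Hxy' Hx Hy.
  replace (- g x' y' - - g x y) with (- (g x' y' - g x y)) by ring.
  rewrite Rabs_Ropp. apply Hgd; assumption.
Qed.

Lemma is_derive_lim_seq (Fn Dn : nat -> R -> R) (F : R -> R) t L :
  (forall n x, is_derive (Fn n) x (Dn n x)) ->
  (forall x, is_lim_seq (fun n => Fn n x) (F x)) ->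
  filterlim (fun p => Dn (fst p) (snd p)) (filter_prod eventually (locally t)) (locally L) ->
  is_derive F t L.
Proof.
  intros HD Hlim HDL. apply is_derive_Reals. intros eps Heps.
  assert (Heps2 : 0 < eps / 2) by lra.
  destruct (HDL _ (locally_ball L (mkposreal _ Heps2)))
    as [Q R [N HN] [eta Heta] HQR].
  exists eta. intros h Hh0 Hh.
  (* Mean value theorem for each [Fn n] on [t, t + h]; the bound survives the limit. *)
  assert (Hbound : forall n, (N <= n)%nat ->
     Rabs (Fn n (t + h) - Fn n t - L * h) <= eps / 2 * Rabs h).
  { intros n Hn.
    destruct (MVT_gen (Fn n) t (t + h) (Dn n)) as [c [Hc ->]].
    - intros x _. apply HD.
    - intros x _. apply derivable_continuous_pt. exists (Dn n x).
      apply is_derive_Reals, HD.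
    - replace (Dn n c * (t + h - t) - L * h) with ((Dn n c - L) * h) by ring.
      rewrite Rabs_mult. apply Rmult_le_compat_r; [apply Rabs_pos |].
      apply Rlt_le, (HQR n c (HN n Hn)).
      apply Heta. change (Rabs (c - t) < eta).
      revert Hc. unfold Rmin, Rmax. apply Rabs_def2 in Hh.
      destruct (Rle_dec t (t + h)); intros [Hc1 Hc2]; apply Rabs_def1; lra. }
  assert (Hle : Rabs (F (t + h) - F t - L * h) <= eps / 2 * Rabs h).
  { refine (is_lim_seq_le_loc (fun n => Rabs (Fn n (t + h) - Fn n t - L * h))
      (fun _ => eps / 2 * Rabs h) (Rabs (F (t + h) - F t - L * h)) (eps / 2 * Rabs h)
      (ex_intro _ N Hbound) _ _).
    - apply (is_lim_seq_abs _ (Finite _)), is_lim_seq_minus';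
        [apply is_lim_seq_minus'; apply Hlim | apply is_lim_seq_const].
    - apply is_lim_seq_const. }
  assert (Hh_pos : 0 < Rabs h) by (apply Rabs_pos_lt; exact Hh0).
  replace ((F (t + h) - F t) / h - L) with ((F (t + h) - F t - L * h) / h)
    by (field; exact Hh0).
  rewrite Rabs_div by exact Hh0.
  apply (Rmult_lt_reg_r (Rabs h)); [exact Hh_pos |].
  unfold Rdiv. rewrite Rmult_assoc, Rinv_l by lra. nra.
Qed.

Lemma is_derive_bdry F Fx Fy t : C1_cB F Fx Fy ->
  is_derive (bdry F) t (- sin t * Fx (cos t) (sin t) + cos t * Fy (cos t) (sin t)).
Proof.
  intros [HF [HFx [HFy HDF]]].
  assert (Hin : forall n x, in_B (rad n * cos x) (rad n * sin x)).
  { intros n x. apply in_B_rad_scale. unfold in_cB. rewrite (on_dB_cos_sin x). lra. }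
  assert (Hct : in_cB (cos t) (sin t)) by (unfold in_cB; rewrite (on_dB_cos_sin t); lra).
  set (G := filter_prod eventually (locally t)).
  assert (Hscale : forall h : R -> R, continuous h t ->
    filterlim (fun p : nat * R => rad (fst p) * h (snd p)) G (locally (h t))).
  { intros h Hh. apply (filterlim_rad_mul fst); [apply filterlim_fst |].
    exact (filterlim_comp _ _ _ snd h G (locally t) (locally (h t)) filterlim_snd Hh). }
  assert (HinG : G (fun p : nat * R =>
    in_cB (rad (fst p) * cos (snd p)) (rad (fst p) * sin (snd p))))
    by (apply filter_forall; intros p; apply Rlt_le, Hin).
  replace (- sin t * Fx (cos t) (sin t) + cos t * Fy (cos t) (sin t))
    with (Fx (cos t) (sin t) * - sin t + Fy (cos t) (sin t) * cos t) by ring.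
  apply (is_derive_lim_seq (fun n x => F (rad n * cos x) (rad n * sin x))
    (fun n x => Fx (rad n * cos x) (rad n * sin x) * (rad n * - sin x)
              + Fy (rad n * cos x) (rad n * sin x) * (rad n * cos x))).
  - intros n x. apply is_derive_Reals, derivable_pt_lim_comp_2d; [apply HDF, Hin | |];
      apply is_derive_Reals; auto_derive; auto; ring.
  - intros x. apply (filterlim_continuous_on_cB F); auto.
    + unfold in_cB. rewrite (on_dB_cos_sin x). lra.
    + apply filterlim_rad_scale.
    + apply filterlim_rad_scale.
    + apply filter_forall. intros n. apply Rlt_le, Hin.
  - apply filterlim_Rplus; apply filterlim_Rmult.
    + apply (filterlim_continuous_on_cB Fx); auto;
        apply Hscale; [apply continuous_cos | apply continuous_sin].
    + exact (Hscale (fun x => - sin x) (continuous_opp sin t (continuous_sin t))).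
    + apply (filterlim_continuous_on_cB Fy); auto;
        apply Hscale; [apply continuous_cos | apply continuous_sin].
    + apply Hscale, continuous_cos.
Qed.

Lemma Derive_bdry F Fx Fy t : C1_cB F Fx Fy ->
  Derive (bdry F) t = - sin t * Fx (cos t) (sin t) + cos t * Fy (cos t) (sin t).
Proof. intros HF. apply is_derive_unique, is_derive_bdry, HF. Qed.

Lemma continuous_Derive_bdry F Fx Fy t : C1_cB F Fx Fy -> continuous (Derive (bdry F)) t.
Proof.
  intros HF.
  apply (continuous_ext (fun s => - sin s * bdry Fx s + cos s * bdry Fy s)).
  { intros s. symmetry. apply Derive_bdry, HF. }
  destruct HF as [_ [HFx [HFy _]]].
  apply continuous_Rplus; apply continuous_Rmult.
  - exact (continuous_opp sin t (continuous_sin t)).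
  - apply continuous_bdry, HFx.
  - apply continuous_cos.
  - apply continuous_bdry, HFy.
Qed.

Lemma Derive_bdry_2PI F Fx Fy : C1_cB F Fx Fy ->
  Derive (bdry F) (2 * PI) = Derive (bdry F) 0.
Proof.
  intros HF. rewrite !(Derive_bdry F Fx Fy) by exact HF.
  rewrite cos_2PI, sin_2PI, cos_0, sin_0. reflexivity.
Qed.

Definition not_antiparallel (p1 p2 q1 q2 : R) : Prop :=
  0 < sqrt (p1 ^ 2 + p2 ^ 2) * sqrt (q1 ^ 2 + q2 ^ 2) + (p1 * q1 + p2 * q2).

(* Half-angle formula tan(θ/2) = sin θ / (1 + cos θ) for the angle θ from p to q. *)
Definition angle_diff (p1 p2 q1 q2 : R) : R :=
  2 * atan ((p1 * q2 - p2 * q1) /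
    (sqrt (p1 ^ 2 + p2 ^ 2) * sqrt (q1 ^ 2 + q2 ^ 2) + (p1 * q1 + p2 * q2))).

Lemma not_antiparallel_sym p1 p2 q1 q2 :
  not_antiparallel p1 p2 q1 q2 -> not_antiparallel q1 q2 p1 p2.
Proof. unfold not_antiparallel. nra. Qed.

Lemma cos_sin_2atan x :
  cos (2 * atan x) * (1 + x ^ 2) = 1 - x ^ 2 /\ sin (2 * atan x) * (1 + x ^ 2) = 2 * x.
Proof.
  assert (H1 : 0 < 1 + x²) by (unfold Rsqr; nra).
  rewrite cos_2a, sin_2a, cos_atan, sin_atan.
  set (s := sqrt (1 + x²)).
  assert (Hs : s * s = 1 + x²) by (apply sqrt_sqrt; lra).
  assert (Hs0 : 0 < s) by (apply sqrt_lt_R0; lra).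
  unfold Rsqr in *. split.
  - replace ((1 / s * (1 / s) - x / s * (x / s)) * (1 + x ^ 2))
      with ((1 - x * x) * (1 + x * x) / (s * s)) by (field; lra).
    rewrite Hs. field. lra.
  - replace (2 * (x / s) * (1 / s) * (1 + x ^ 2))
      with (2 * x * (1 + x * x) / (s * s)) by (field; lra).
    rewrite Hs. field. lra.
Qed.

Lemma cos_sin_half_angle c d N : 0 < N + d -> N * N = c * c + d * d ->
  cos (2 * atan (c / (N + d))) * N = d /\ sin (2 * atan (c / (N + d))) * N = c.
Proof.
  intros Hpos HN.
  destruct (cos_sin_2atan (c / (N + d))) as [Hc Hs].
  assert (Hden : 1 + (c / (N + d)) ^ 2 = 2 * N / (N + d)).
  { field_simplify_eq; [nra | lra]. }
  rewrite Hden in Hc, Hs.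
  assert (HN0 : 0 < N).
  { destruct (Rle_lt_dec N 0) as [HN0 | HN0]; [| exact HN0].
    assert (0 < (N + d) * (d - N)) by (apply Rmult_lt_0_compat; lra). nra. }
  split.
  - apply (Rmult_eq_reg_r (2 / (N + d))); [| apply Rgt_not_eq, Rdiv_lt_0_compat; lra].
    replace (cos (2 * atan (c / (N + d))) * N * (2 / (N + d)))
      with (cos (2 * atan (c / (N + d))) * (2 * N / (N + d))) by (field; lra).
    rewrite Hc. field_simplify_eq; [nra | lra].
  - apply (Rmult_eq_reg_r (2 / (N + d))); [| apply Rgt_not_eq, Rdiv_lt_0_compat; lra].
    replace (sin (2 * atan (c / (N + d))) * N * (2 / (N + d)))
      with (sin (2 * atan (c / (N + d))) * (2 * N / (N + d))) by (field; lra).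
    rewrite Hs. field. lra.
Qed.

Lemma not_antiparallel_cos_sin p1 p2 q1 q2 : not_antiparallel p1 p2 q1 q2 ->
  0 < sqrt (p1 ^ 2 + p2 ^ 2) /\
  cos (angle_diff p1 p2 q1 q2) * (sqrt (p1 ^ 2 + p2 ^ 2) * sqrt (q1 ^ 2 + q2 ^ 2))
    = p1 * q1 + p2 * q2 /\
  sin (angle_diff p1 p2 q1 q2) * (sqrt (p1 ^ 2 + p2 ^ 2) * sqrt (q1 ^ 2 + q2 ^ 2))
    = p1 * q2 - p2 * q1.
Proof.
  unfold not_antiparallel, angle_diff. intros Hpos.
  set (sp := sqrt (p1 ^ 2 + p2 ^ 2)) in *. set (sq := sqrt (q1 ^ 2 + q2 ^ 2)) in *.
  assert (Hsp : sp * sp = p1 ^ 2 + p2 ^ 2) by (apply sqrt_sqrt; nra).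
  assert (Hsq : sq * sq = q1 ^ 2 + q2 ^ 2) by (apply sqrt_sqrt; nra).
  assert (Hlagrange : sp * sq * (sp * sq)
    = (p1 * q2 - p2 * q1) * (p1 * q2 - p2 * q1) + (p1 * q1 + p2 * q2) * (p1 * q1 + p2 * q2)).
  { transitivity ((sp * sp) * (sq * sq)); [ring | rewrite Hsp, Hsq; ring]. }
  destruct (cos_sin_half_angle _ _ _ Hpos Hlagrange) as [Hc Hs].
  split; [| split; assumption].
  destruct (Rle_lt_dec sp 0) as [Hsp0 | Hsp0]; [exfalso | exact Hsp0].
  assert (Hzero : sp = 0) by (assert (0 <= sp) by apply sqrt_pos; lra).
  rewrite Hzero, !Rmult_0_l in Hlagrange, Hpos. nra.
Qed.

Lemma arg_rotate_angle_diff p1 p2 q1 q2 phi : not_antiparallel p1 p2 q1 q2 ->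
  p1 = sqrt (p1 ^ 2 + p2 ^ 2) * cos phi -> p2 = sqrt (p1 ^ 2 + p2 ^ 2) * sin phi ->
  q1 = sqrt (q1 ^ 2 + q2 ^ 2) * cos (phi + angle_diff p1 p2 q1 q2) /\
  q2 = sqrt (q1 ^ 2 + q2 ^ 2) * sin (phi + angle_diff p1 p2 q1 q2).
Proof.
  intros Hna Hp1 Hp2.
  destruct (not_antiparallel_cos_sin _ _ _ _ Hna) as [Hsp0 [Hc Hs]].
  set (sp := sqrt (p1 ^ 2 + p2 ^ 2)) in *. set (sq := sqrt (q1 ^ 2 + q2 ^ 2)) in *.
  set (D := angle_diff p1 p2 q1 q2) in *.
  assert (Hsp : sp * sp = p1 ^ 2 + p2 ^ 2) by (apply sqrt_sqrt; nra).
  rewrite cos_plus, sin_plus.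
  split; apply (Rmult_eq_reg_l (sp * sp)); try (apply Rgt_not_eq; nra).
  - transitivity (sp * cos phi * (cos D * (sp * sq)) - sp * sin phi * (sin D * (sp * sq)));
      [| ring].
    rewrite <- Hp1, <- Hp2, Hc, Hs, Hsp. ring.
  - transitivity (sp * sin phi * (cos D * (sp * sq)) + sp * cos phi * (sin D * (sp * sq)));
      [| ring].
    rewrite <- Hp1, <- Hp2, Hc, Hs, Hsp. ring.
Qed.

Lemma continuous_sqrt_sum_sq (a b : R -> R) t : continuous a t -> continuous b t ->
  continuous (fun s => sqrt (a s ^ 2 + b s ^ 2)) t.
Proof.
  intros Ha Hb. apply continuous_sqrt_comp, continuous_Rplus;
    apply continuous_Rmult; auto; apply continuous_Rmult; auto using continuous_const.
Qed.

Lemma continuous_angle_diff (p1 p2 q1 q2 : R -> R) t :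
  continuous p1 t -> continuous p2 t -> continuous q1 t -> continuous q2 t ->
  not_antiparallel (p1 t) (p2 t) (q1 t) (q2 t) ->
  continuous (fun s => angle_diff (p1 s) (p2 s) (q1 s) (q2 s)) t.
Proof.
  intros C1 C2 C3 C4 Hna. unfold angle_diff, Rdiv.
  apply continuous_Rmult; [apply continuous_const |].
  apply continuous_atan_comp, continuous_Rmult.
  - apply (continuous_minus (V := R_NormedModule)); apply continuous_Rmult; assumption.
  - apply continuous_Rinv_comp; [| apply Rgt_not_eq, Hna].
    apply continuous_Rplus; [apply continuous_Rmult; apply continuous_sqrt_sum_sq; assumption |].
    apply continuous_Rplus; apply continuous_Rmult; assumption.
Qed.

Lemma arg_lift_angle_diff (p1 p2 q1 q2 phi : R -> R) :
  (forall t, continuous p1 t) -> (forall t, continuous p2 t) ->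
  (forall t, continuous q1 t) -> (forall t, continuous q2 t) ->
  (forall t, not_antiparallel (p1 t) (p2 t) (q1 t) (q2 t)) ->
  arg_lift p1 p2 phi ->
  arg_lift q1 q2 (fun t => phi t + angle_diff (p1 t) (p2 t) (q1 t) (q2 t)).
Proof.
  intros C1 C2 C3 C4 Hna [Hphi Hlift]. split.
  - intros t. apply continuous_Rplus; [apply Hphi | apply continuous_angle_diff; auto].
  - intros t. destruct (Hlift t). apply arg_rotate_angle_diff; auto.
Qed.

Lemma not_antiparallel_same_first a b1 b2 : (a = 0 -> 0 < b1 * b2) ->
  not_antiparallel a b1 a b2.
Proof.
  unfold not_antiparallel. intros Hzero.
  set (S := sqrt (a ^ 2 + b1 ^ 2) * sqrt (a ^ 2 + b2 ^ 2)).
  assert (HS0 : 0 <= S) by (apply Rmult_le_pos; apply sqrt_pos).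
  assert (HS2 : S * S = (a ^ 2 + b1 ^ 2) * (a ^ 2 + b2 ^ 2)).
  { unfold S. rewrite <- sqrt_mult by nra. apply sqrt_sqrt. nra. }
  assert (HS : a ^ 2 + Rabs (b1 * b2) <= S).
  { rewrite Rabs_mult, <- (pow2_abs b1), <- (pow2_abs b2) in *.
    set (x := Rabs b1) in *. set (y := Rabs b2) in *.
    assert (0 <= x) by apply Rabs_pos. assert (0 <= y) by apply Rabs_pos.
    assert (0 <= a ^ 2 * (x - y) ^ 2) by (apply Rmult_le_pos; apply pow2_ge_0).
    assert (Hsq : (a ^ 2 + x * y) * (a ^ 2 + x * y) <= S * S) by (rewrite HS2; nra).
    apply Rsqr_incr_0_var; [exact Hsq | exact HS0]. }
  pose proof (Rle_abs (- (b1 * b2))) as Habs. rewrite Rabs_Ropp in Habs.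
  destruct (Req_dec a 0) as [Ha | Ha].
  - specialize (Hzero Ha). subst a. lra.
  - assert (0 < a ^ 2) by (apply pow2_gt_0; exact Ha). lra.
Qed.

Lemma arg_lift_increment_transfer (p1 p2 q1 q2 : R -> R) a b c w :
  (forall t, continuous p1 t) -> (forall t, continuous p2 t) ->
  (forall t, continuous q1 t) -> (forall t, continuous q2 t) ->
  p1 b = p1 a -> p2 b = p2 a -> q1 b = q1 a -> q2 b = q2 a ->
  (forall t, not_antiparallel (p1 t) (p2 t) (q1 t) (q2 t)) ->
  (exists phi, arg_lift p1 p2 phi /\ w = (phi b - phi a) / c) ->
  (exists psi, arg_lift q1 q2 psi /\ w = (psi b - psi a) / c).
Proof.
  intros C1 C2 C3 C4 E1 E2 E3 E4 Hna [phi [Hphi ->]].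
  exists (fun t => phi t + angle_diff (p1 t) (p2 t) (q1 t) (q2 t)). split.
  - apply arg_lift_angle_diff; assumption.
  - rewrite E1, E2, E3, E4. unfold Rdiv. ring.
Qed.

Lemma WN_eq_of_not_antiparallel (F1 F2 G1 G2 : R -> R -> R) :
  (forall t, continuous (Derive (bdry F1)) t) -> (forall t, continuous (Derive (bdry F2)) t) ->
  (forall t, continuous (Derive (bdry G1)) t) -> (forall t, continuous (Derive (bdry G2)) t) ->
  Derive (bdry F1) (2 * PI) = Derive (bdry F1) 0 ->
  Derive (bdry F2) (2 * PI) = Derive (bdry F2) 0 ->
  Derive (bdry G1) (2 * PI) = Derive (bdry G1) 0 ->
  Derive (bdry G2) (2 * PI) = Derive (bdry G2) 0 ->
  (forall t, not_antiparallel (Derive (bdry F1) t) (Derive (bdry F2) t)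
                              (Derive (bdry G1) t) (Derive (bdry G2) t)) ->
  WN F1 F2 = WN G1 G2.
Proof.
  intros C1 C2 C3 C4 E1 E2 E3 E4 Hna. unfold WN. f_equal.
  apply functional_extensionality. intros w.
  apply propositional_extensionality. split;
    apply arg_lift_increment_transfer; auto using not_antiparallel_sym.
Qed.

Lemma tangents_not_antiparallel c s X Y V W : c ^ 2 + s ^ 2 = 1 -> X * W - Y * V > 0 ->
  not_antiparallel (- s * X + c * Y) (c * X + s * Y) (- s * X + c * Y) (- s * V + c * W).
Proof.
  intros Hcs Hdet. apply not_antiparallel_same_first. intros Hzero.
  (* On the unit circle the left-hand side is u_r v_θ - u_θ v_r. *)
  assert (Hid : (c * X + s * Y) * (- s * V + c * W) - (- s * X + c * Y) * (c * V + s * W)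
              = (c ^ 2 + s ^ 2) * (X * W - Y * V)) by ring.
  rewrite Hzero, Hcs in Hid. lra.
Qed.

Theorem lemma3p11
  (u v ux uy vx vy ut utx uty : R -> R -> R) :
  (* U = (u, v) ∈ C^1(closed B; R^2), harmonic in B *)
  C1_cB u ux uy -> C1_cB v vx vy ->
  harmonic_in_B u -> harmonic_in_B v ->
  (* ut is a harmonic conjugate of u in B (Cauchy-Riemann for f = u + i ut),
     taken with its continuous (C^1) extension to the closed disk *)
  C1_cB ut utx uty ->
  (forall x y, in_B x y -> utx x y = - uy x y /\ uty x y = ux x y) ->
  (* det DU > 0 on ∂B *)
  (forall x y, on_dB x y -> ux x y * vy x y - uy x y * vx x y > 0) ->
  (* ∂u/∂θ restricted to ∂B vanishes at only finitely many points *)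
  (exists l : list (R * R), forall x y, on_dB x y ->
      - y * ux x y + x * uy x y = 0 -> In (x, y) l) ->
  WN u ut = WN u v.
Proof.
  intros Cu Cv _ _ Ct Hcr Hdet _.
  assert (Hcr_dB : forall x y, on_dB x y -> utx x y = - uy x y /\ uty x y = ux x y).
  { destruct Cu as [_ [Cux [Cuy _]]]. destruct Ct as [_ [Ctx [Cty _]]].
    intros x y Hxy. split.
    - apply (continuous_on_cB_ext_dB utx (fun x y => - uy x y));
        auto using continuous_on_cB_opp. intros x' y' Hxy'. apply Hcr, Hxy'.
    - apply (continuous_on_cB_ext_dB uty ux); auto. intros x' y' Hxy'. apply Hcr, Hxy'. }
  apply WN_eq_of_not_antiparallel; eauto using continuous_Derive_bdry, Derive_bdry_2PI.
  intros t.
  rewrite (Derive_bdry u ux uy t Cu), (Derive_bdry ut utx uty t Ct),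
    (Derive_bdry v vx vy t Cv).
  destruct (Hcr_dB _ _ (on_dB_cos_sin t)) as [-> ->].
  replace (- sin t * - uy (cos t) (sin t) + cos t * ux (cos t) (sin t))
    with (cos t * ux (cos t) (sin t) + sin t * uy (cos t) (sin t)) by ring.
  apply tangents_not_antiparallel; [apply on_dB_cos_sin | apply Hdet, on_dB_cos_sin].
Qed.
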